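(* (i) $F_{L_2}\Subset F^{*}_{\mathcal T_1}$ but $F_{L_1}\not\Subset F^{*}_{\mathcal T_1}$. (ii) $F_{L_4}\Subset F^{**}_{\mathcal T_1}$ but $F_{L_3}\not\Subset F^{**}_{\mathcal T_1}$. (iii) $F_{L_3}\Subset F^{*}_{\mathcal T_2}$ but $F_{L_4}\not\Subset F^{*}_{\mathcal T_2}$. (iv) $F_Q\Subset F^{*}_{\mathcal T_1}$, $F_Q\Subset F^{**}_{\mathcal T_1}$ and $F_Q\Subset F^{*}_{\mathcal T_2}$.
   Context: $H_k\subseteq\mathbb R[x,y,z]$: real ternary forms of degree $k$; $P_{3,4}=\{f\in H_4: f\ge0\text{ on }\mathbb P^2(\mathbb R)\}$. For $f\in P_{3,4}$, $F_f=\{g\in P_{3,4}: f-\epsilon g\in P_{3,4}$ for some $\epsilon>0\}$ (the smallest face of $P_{3,4}$ containing $f$). $GL_3(\mathbb R)$ acts on forms by $(\sigma f)(a)=f(\sigma^{-1}a)$. For faces $F,G$ of $P_{3,4}$, $F\Subset G$ means there is $\sigma\in GL_3(\mathbb R)$ with $F\subseteq\sigma(G)$. For a real line $l'$ (identified with a defining linear form) and a projective linear subspace $U\subseteq\mathbb P^2(\mathbb R)$, $F_{(l',U)}=\{l'^2g: g\in H_2,\ g\ge0\text{ on }\mathbb P^2(\mathbb R),\ g|_U=0\}$. Fix distinct real lines $l,k$, $p\in l$, $q\notin l$: $F_{L_1}=F_{(l,\{q\})}$, $F_{L_2}=F_{(l,\{p\})}$, $F_{L_3}=F_{(l,k)}$,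 $F_{L_4}=F_{(l,l)}$. Further $F_Q=F_{g^2}$ with $g=x^2-y^2+z^2$; $F^{*}_{\mathcal T_1}=F_f$ with $f=(xy+z^2)^2+y^2z^2+y^4$; $F^{**}_{\mathcal T_1}=F_f$ with $f=(xy+z^2)^2+y^4$; $F^{*}_{\mathcal T_2}=F_f$ with $f=(xy+z^2)^2+y^2z^2$. *)

From Stdlib Require Import Reals.
Open Scope R_scope.

(* A ternary "form" is represented by its polynomial function R^3 -> R
   (polynomials over R are determined by their functions). *)
Definition form := R -> R -> R -> R.

Definition is_form (k : nat) (f : form) : Prop :=
  exists c : nat -> nat -> R, forall x y z,
    f x y z = sum_f_R0 (fun i =>
                sum_f_R0 (fun j => c i j * x ^ i * y ^ j * z ^ (k - i - j)) (k - i)) k.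

(* nonnegative on P^2(R), i.e. on R^3 (f(0)=0 for k>0). *)
Definition nonneg (f : form) : Prop := forall x y z, 0 <= f x y z.

Definition P34 (f : form) : Prop := is_form 4 f /\ nonneg f.

(* F_f : smallest face of P_{3,4} containing f *)
Definition face (f : form) : form -> Prop :=
  fun g => P34 g /\ exists eps, 0 < eps /\ P34 (fun x y z => f x y z - eps * g x y z).

(* GL_3(R): an invertible 3x3 matrix together with its inverse (indices 0,1,2). *)
Definition mat := nat -> nat -> R.
Definition is_id (P : mat) : Prop :=
  forall i j, (i < 3)%nat -> (j < 3)%nat -> P i j = if Nat.eqb i j then 1 else 0.
Definition mmul (A B : mat) : mat := fun i j => A i 0%nat * B 0%nat j + A i 1%nat * B 1%nat j + A i 2%nat * B 2%nat j.
Record GL3 := { gM : mat; gMinv : mat;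
                gInv1 : is_id (mmul gM gMinv); gInv2 : is_id (mmul gMinv gM) }.

Definition mapp (A : mat) (x y z : R) (i : nat) : R := A i 0%nat * x + A i 1%nat * y + A i 2%nat * z.

Definition act (s : GL3) (f : form) : form :=
  fun x y z => f (mapp (gMinv s) x y z 0) (mapp (gMinv s) x y z 1) (mapp (gMinv s) x y z 2).

Definition act_set (s : GL3) (G : form -> Prop) : form -> Prop :=
  fun h => exists g, G g /\ forall x y z, h x y z = act s g x y z.

Definition subset_up_to_GL (F G : form -> Prop) : Prop :=
  exists s : GL3, forall h, F h -> act_set s G h.

(* linear forms / points of P^2 as coordinate triples *)
Definition vec := (R * R * R)%type.
Definition lin (l : vec) (x y z : R) : R :=
  let '(a, b, c) := l in a * x + b * y + c * z.
Definition nonzero_vec (v : vec) : Prop := v <> (0, 0, 0).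
Definition on_line (p l : vec) : Prop := let '(x, y, z) := p in lin l x y z = 0.
Definition eval (g : form) (p : vec) : R := let '(x, y, z) := p in g x y z.
Definition proportional (l k : vec) : Prop := exists t : R, k = (let '(a,b,c) := l in (t*a, t*b, t*c)).

(* projective linear subspaces used: a point, or a line *)
Definition vanish_at (g : form) (q : vec) : Prop := eval g q = 0.
Definition vanish_on_line (g : form) (k : vec) : Prop :=
  forall x y z, lin k x y z = 0 -> g x y z = 0.

Definition F_lU (l' : vec) (U : form -> Prop) : form -> Prop :=
  fun h => exists g, is_form 2 g /\ nonneg g /\ U g /\
    forall x y z, h x y z = (lin l' x y z) ^ 2 * g x y z.

Definition F_L1 (l q : vec) := F_lU l (fun g => vanish_at g q).
Definition F_L2 (l p : vec) := F_lU l (fun g => vanish_at g p).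
Definition F_L3 (l k : vec) := F_lU l (fun g => vanish_on_line g k).
Definition F_L4 (l : vec) := F_lU l (fun g => vanish_on_line g l).

Definition F_Q : form -> Prop := face (fun x y z => (x^2 - y^2 + z^2) ^ 2).
Definition F_T1s : form -> Prop := face (fun x y z => (x*y + z^2)^2 + y^2*z^2 + y^4).
Definition F_T1ss : form -> Prop := face (fun x y z => (x*y + z^2)^2 + y^4).
Definition F_T2s : form -> Prop := face (fun x y z => (x*y + z^2)^2 + y^2*z^2).

From Stdlib Require Import Reals Lra Lia Psatz.
Open Scope R_scope.

(* Inclusions [F ⋐ F_f] are proved by pulling back along an explicit [s] in GL_3
   and showing that every pulled-back member of [F] is dominated by a multiple of
   [f], which puts it in the face of [f] ([face_dominated], [lU_subset_face]).
   The change of coordinates sends the line [l] to [y] (and [k] to [z], or the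
   point [p] to [e1]); a nonnegative quadric vanishing on the prescribed locus is
   then [c y^2], [c z^2], or a quadric in [y, z] alone, and [l^2 g] is visibly
   dominated.  [F_Q] is handled by the substitution turning [x^2 - y^2 + z^2]
   into [x y + z^2], the common leading square of the three quartics.

   Non-inclusions use the parabola [(1, -t^2, t)], on which [x y + z^2] vanishes:
   there the quartics are [O(t^6)] or [O(t^8)], so every (transported) member of
   their faces vanishes to that order at [t = 0].  For a product of linear forms
   this pins the forms down ([order3_cases], [order4_proportional]) and
   contradicts the hypotheses on [l], [k], [q]. *)

Lemma form_ext k (f g : form) :
  is_form k f -> (forall x y z, g x y z = f x y z) -> is_form k g.
Proof. intros [c Hc] E. exists c. intros. rewrite E. apply Hc. Qed.

Lemma form_add k (f g : form) :
  is_form k f -> is_form k g -> is_form k (fun x y z => f x y z + g x y z).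
Proof.
  intros [c Hc] [d Hd]. exists (fun i j => c i j + d i j). intros.
  rewrite Hc, Hd, <- plus_sum. apply sum_eq; intros i _.
  rewrite <- plus_sum. apply sum_eq; intros; ring.
Qed.

Lemma form_scal k a (f : form) : is_form k f -> is_form k (fun x y z => a * f x y z).
Proof.
  intros [c Hc]. exists (fun i j => a * c i j). intros.
  rewrite Hc, scal_sum. apply sum_eq; intros i _.
  rewrite Rmult_comm, scal_sum. apply sum_eq; intros; ring.
Qed.

Lemma sum_single (F : nat -> R) i n :
  (forall j, j <> i -> F j = 0) -> (i <= n)%nat -> sum_f_R0 F n = F i.
Proof.
  intros H. induction n as [|n IH]; intros Hi; simpl.
  - replace i with 0%nat by lia. reflexivity.
  - destruct (Nat.eq_dec i (S n)) as [->|Hne].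
    + rewrite (sum_eq F (fun _ => 0)), sum_cte by (intros; apply H; lia). ring.
    + rewrite IH, (H (S n)) by lia. ring.
Qed.

Lemma form_monomial k i j :
  (i + j <= k)%nat -> is_form k (fun x y z => x ^ i * y ^ j * z ^ (k - i - j)).
Proof.
  intros Hij. exists (fun a b => if andb (Nat.eqb a i) (Nat.eqb b j) then 1 else 0). intros.
  rewrite (sum_single _ i) by
    (lia || (intros a Ha; apply Nat.eqb_neq in Ha;
             rewrite (sum_eq _ (fun _ => 0)), sum_cte; [ring | intros; rewrite Ha; simpl; ring])).
  rewrite (sum_single _ j) by
    (lia || (intros b Hb; apply Nat.eqb_neq in Hb; rewrite Nat.eqb_refl, Hb; simpl; ring)).
  rewrite !Nat.eqb_refl. simpl. ring.
Qed.

Lemma form_sum k n (F : nat -> form) :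
  (forall i, (i <= n)%nat -> is_form k (F i)) ->
  is_form k (fun x y z => sum_f_R0 (fun i => F i x y z) n).
Proof.
  induction n as [|n IH]; intros H; simpl.
  - apply H; lia.
  - apply (form_add k (fun x y z => sum_f_R0 (fun i => F i x y z) n) (F (S n))).
    + apply IH; intros; apply H; lia.
    + apply H; lia.
Qed.

Lemma sum_mul_r (F : nat -> R) n a : sum_f_R0 F n * a = sum_f_R0 (fun i => F i * a) n.
Proof. rewrite Rmult_comm. apply scal_sum. Qed.

Lemma form_mul a b (f g : form) :
  is_form a f -> is_form b g -> is_form (a + b) (fun x y z => f x y z * g x y z).
Proof.
  intros [c Hc] [d Hd].
  apply (form_ext _ (fun x y z => sum_f_R0 (fun i => sum_f_R0 (fun j =>
     sum_f_R0 (fun i' => sum_f_R0 (fun j' =>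
       c i j * d i' j' * (x ^ (i + i') * y ^ (j + j') * z ^ (a + b - (i + i') - (j + j'))))
       (b - i')) b) (a - i)) a)).
  - do 4 (apply (form_sum _ _ (fun _ x y z => _)); intros).
    apply form_scal, form_monomial. lia.
  - intros. rewrite Hc, Hd, sum_mul_r. apply sum_eq; intros i Hi.
    rewrite sum_mul_r. apply sum_eq; intros j Hj.
    rewrite scal_sum. apply sum_eq; intros i' Hi'.
    rewrite sum_mul_r. apply sum_eq; intros j' Hj'.
    replace (a + b - (i + i') - (j + j'))%nat with (a - i - j + (b - i' - j'))%nat by lia.
    rewrite !pow_add. ring.
Qed.

Lemma form_linear a b c : is_form 1 (fun x y z => a * x + b * y + c * z).
Proof.
  apply (form_ext _ (fun x y z => a * (x ^ 1 * y ^ 0 * z ^ (1 - 1 - 0))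
         + b * (x ^ 0 * y ^ 1 * z ^ (1 - 0 - 1)) + c * (x ^ 0 * y ^ 0 * z ^ (1 - 0 - 0)))).
  - repeat apply form_add; apply form_scal, form_monomial; lia.
  - intros. simpl. ring.
Qed.

Lemma form_pow n (f : form) : is_form 1 f -> is_form n (fun x y z => f x y z ^ n).
Proof.
  intros Hf. induction n as [|n IH].
  - apply (form_ext _ (fun x y z => x ^ 0 * y ^ 0 * z ^ (0 - 0 - 0))).
    + apply form_monomial; lia.
    + intros. simpl. ring.
  - apply (form_ext _ (fun x y z => f x y z * f x y z ^ n)).
    + apply (form_mul 1 n); assumption.
    + intros. simpl. ring.
Qed.

Lemma form_lin_pow n (l : vec) : is_form n (fun x y z => lin l x y z ^ n).
Proof. destruct l as [[a b] c]. apply form_pow, form_linear. Qed.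

Lemma form_subst k (f : form) (a1 b1 c1 a2 b2 c2 a3 b3 c3 : R) : is_form k f ->
  is_form k (fun x y z =>
    f (a1 * x + b1 * y + c1 * z) (a2 * x + b2 * y + c2 * z) (a3 * x + b3 * y + c3 * z)).
Proof.
  intros [c Hc].
  eapply form_ext; [| intros; rewrite Hc; reflexivity].
  do 2 (apply (form_sum _ _ (fun _ x y z => _)); intros).
  eapply form_ext; [| intros; rewrite 2!Rmult_assoc; reflexivity].
  apply form_scal.
  replace k with (i + (i0 + (k - i - i0)))%nat at 1 by lia.
  apply (form_mul i _ (fun x y z => (a1 * x + b1 * y + c1 * z) ^ i));
    [| apply (form_mul i0 _ (fun x y z => (a2 * x + b2 * y + c2 * z) ^ i0))];
    apply form_pow, form_linear.
Qed.

Lemma pow_eq0 (a : R) n : a ^ n = 0 -> a = 0.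
Proof. intros H. destruct (Req_dec a 0) as [|Ha]; [assumption|]. now destruct (pow_nonzero a n Ha). Qed.

Lemma norm2_pos a b c : nonzero_vec (a, b, c) -> 0 < a ^ 2 + b ^ 2 + c ^ 2.
Proof.
  intros H. destruct (Rle_lt_or_eq_dec 0 (a ^ 2 + b ^ 2 + c ^ 2)) as [|E]; [nra | assumption |].
  exfalso. apply H.
  assert (a ^ 2 = 0) by nra. assert (b ^ 2 = 0) by nra. assert (c ^ 2 = 0) by nra.
  rewrite (pow_eq0 a 2), (pow_eq0 b 2), (pow_eq0 c 2) by assumption. reflexivity.
Qed.

Definition mk3 (a b c d e f g h i : R) : mat := fun r s =>
  match r, s with
  | 0, 0 => a | 0, 1 => b | 0, _ => c
  | 1, 0 => d | 1, 1 => e | 1, _ => f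
  | _, 0 => g | _, 1 => h | _, _ => i end%nat.

Definition det3 (N : mat) : R :=
  N 0%nat 0%nat * (N 1%nat 1%nat * N 2%nat 2%nat - N 1%nat 2%nat * N 2%nat 1%nat)
  - N 0%nat 1%nat * (N 1%nat 0%nat * N 2%nat 2%nat - N 1%nat 2%nat * N 2%nat 0%nat)
  + N 0%nat 2%nat * (N 1%nat 0%nat * N 2%nat 1%nat - N 1%nat 1%nat * N 2%nat 0%nat).

Definition inv3 (N : mat) : mat :=
  mk3 ((N 1%nat 1%nat * N 2%nat 2%nat - N 1%nat 2%nat * N 2%nat 1%nat) / det3 N)
      ((N 0%nat 2%nat * N 2%nat 1%nat - N 0%nat 1%nat * N 2%nat 2%nat) / det3 N)
      ((N 0%nat 1%nat * N 1%nat 2%nat - N 0%nat 2%nat * N 1%nat 1%nat) / det3 N)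
      ((N 1%nat 2%nat * N 2%nat 0%nat - N 1%nat 0%nat * N 2%nat 2%nat) / det3 N)
      ((N 0%nat 0%nat * N 2%nat 2%nat - N 0%nat 2%nat * N 2%nat 0%nat) / det3 N)
      ((N 0%nat 2%nat * N 1%nat 0%nat - N 0%nat 0%nat * N 1%nat 2%nat) / det3 N)
      ((N 1%nat 0%nat * N 2%nat 1%nat - N 1%nat 1%nat * N 2%nat 0%nat) / det3 N)
      ((N 0%nat 1%nat * N 2%nat 0%nat - N 0%nat 0%nat * N 2%nat 1%nat) / det3 N)
      ((N 0%nat 0%nat * N 1%nat 1%nat - N 0%nat 1%nat * N 1%nat 0%nat) / det3 N).

Lemma inv3_spec (N : mat) : det3 N <> 0 -> is_id (mmul N (inv3 N)) /\ is_id (mmul (inv3 N) N).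
Proof.
  intros H. unfold det3 in H. split; intros i j Hi Hj;
  (destruct i as [|[|[|i]]]; [| | | lia]); (destruct j as [|[|[|j]]]; [| | | lia]);
  unfold mmul, inv3, mk3, det3; simpl; field; exact H.
Qed.

Definition GL_of (N : mat) (H : det3 N <> 0) : GL3 :=
  {| gM := N; gMinv := inv3 N; gInv1 := proj1 (inv3_spec N H); gInv2 := proj2 (inv3_spec N H) |}.

Definition GL_inv (s : GL3) : GL3 :=
  {| gM := gMinv s; gMinv := gM s; gInv1 := gInv2 s; gInv2 := gInv1 s |}.

Lemma mapp_id (A B : mat) x y z : is_id (mmul A B) ->
  mapp A (mapp B x y z 0) (mapp B x y z 1) (mapp B x y z 2) 0 = x /\
  mapp A (mapp B x y z 0) (mapp B x y z 1) (mapp B x y z 2) 1 = y /\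
  mapp A (mapp B x y z 0) (mapp B x y z 1) (mapp B x y z 2) 2 = z.
Proof.
  intros H.
  assert (E : forall i, mapp A (mapp B x y z 0) (mapp B x y z 1) (mapp B x y z 2) i =
     mmul A B i 0%nat * x + mmul A B i 1%nat * y + mmul A B i 2%nat * z)
    by (intros; unfold mapp, mmul; ring).
  rewrite !E, !H by lia. simpl. repeat split; ring.
Qed.

Lemma mapp_nonzero (s : GL3) x y z : nonzero_vec (x, y, z) ->
  nonzero_vec (mapp (gM s) x y z 0, mapp (gM s) x y z 1, mapp (gM s) x y z 2).
Proof.
  intros H E. injection E as E0 E1 E2. apply H.
  destruct (mapp_id (gMinv s) (gM s) x y z (gInv2 s)) as [X [Y Z]].
  rewrite E0, E1, E2 in X, Y, Z. unfold mapp in X, Y, Z.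
  rewrite <- X, <- Y, <- Z. f_equal; [f_equal|]; ring.
Qed.

(* Pulling a form back along the matrix [M] of [s]: [(pull s h)(v) = h(M v)].
   Since [act s] is substitution of [M^{-1}], pulling back inverts the action. *)
Definition pull (s : GL3) (h : form) : form := fun x y z =>
  h (mapp (gM s) x y z 0) (mapp (gM s) x y z 1) (mapp (gM s) x y z 2).

Lemma act_pull s h x y z : h x y z = act s (pull s h) x y z.
Proof.
  unfold act, pull. now destruct (mapp_id (gM s) (gMinv s) x y z (gInv1 s)) as [-> [-> ->]].
Qed.

Lemma pull_act s h g :
  (forall x y z, h x y z = act s g x y z) -> forall x y z, g x y z = pull s h x y z.
Proof.
  intros H x y z. unfold pull. rewrite H. unfold act.
  now destruct (mapp_id (gMinv s) (gM s) x y z (gInv2 s)) as [-> [-> ->]].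
Qed.

Lemma pull_form s k h : is_form k h -> is_form k (pull s h).
Proof. intros H. unfold pull, mapp. now apply form_subst. Qed.

Lemma pull_P34 s h : P34 h -> P34 (pull s h).
Proof. intros [Hf Hn]. split; [now apply pull_form | intros x y z; apply Hn]. Qed.

Lemma subset_by_pull (F G : form -> Prop) (s : GL3) :
  (forall h, F h -> G (pull s h)) -> subset_up_to_GL F G.
Proof.
  intros H. exists s. intros h Hh. exists (pull s h). split; [now apply H | apply act_pull].
Qed.

Definition vscale (t : R) (l : vec) : vec := let '(a, b, c) := l in (t * a, t * b, t * c).

(* Linear forms transform by the transposed matrix: [l ∘ M] has coefficients [l M]. *)
Definition tvec (s : GL3) (l : vec) : vec :=
  let '(a, b, c) := l in
  (a * gM s 0%nat 0%nat + b * gM s 1%nat 0%nat + c * gM s 2%nat 0%nat,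
   a * gM s 0%nat 1%nat + b * gM s 1%nat 1%nat + c * gM s 2%nat 1%nat,
   a * gM s 0%nat 2%nat + b * gM s 1%nat 2%nat + c * gM s 2%nat 2%nat).

Lemma lin_pull s l x y z :
  lin l (mapp (gM s) x y z 0) (mapp (gM s) x y z 1) (mapp (gM s) x y z 2) = lin (tvec s l) x y z.
Proof. destruct l as [[a b] c]. unfold lin, tvec, mapp. ring. Qed.

Lemma lin_ext (l l' : vec) : (forall x y z, lin l x y z = lin l' x y z) -> l = l'.
Proof.
  destruct l as [[a b] c], l' as [[a' b'] c']. intros H.
  pose proof (H 1 0 0) as A. pose proof (H 0 1 0) as B. pose proof (H 0 0 1) as C.
  simpl in A, B, C. f_equal; [f_equal|]; lra.
Qed.

Lemma tvec_inv s l : tvec (GL_inv s) (tvec s l) = l.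
Proof.
  apply lin_ext. intros x y z. rewrite <- !lin_pull. cbn [GL_inv gM].
  now destruct (mapp_id (gM s) (gMinv s) x y z (gInv1 s)) as [-> [-> ->]].
Qed.

Lemma tvec_scale s t l : tvec s (vscale t l) = vscale t (tvec s l).
Proof. destruct l as [[a b] c]. simpl. f_equal; [f_equal|]; ring. Qed.

Lemma tvec_zero s l : tvec s l = (0, 0, 0) -> l = (0, 0, 0).
Proof.
  intros H. rewrite <- (tvec_inv s l), H. simpl. f_equal; [f_equal|]; ring.
Qed.

Lemma tvec_nonzero s l : nonzero_vec l -> nonzero_vec (tvec s l).
Proof. intros H E. exact (H (tvec_zero s l E)). Qed.

Lemma tvec_proportional s l k : proportional (tvec s l) (tvec s k) -> proportional l k.
Proof.
  intros [t Ht]. exists t. change (k = vscale t l).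
  rewrite <- (tvec_inv s k), <- (tvec_inv s l), <- tvec_scale. f_equal. exact Ht.
Qed.

Lemma tvec_rows_inv (s : GL3) :
  tvec s (gMinv s 1%nat 0%nat, gMinv s 1%nat 1%nat, gMinv s 1%nat 2%nat) = (0, 1, 0) /\
  tvec s (gMinv s 2%nat 0%nat, gMinv s 2%nat 1%nat, gMinv s 2%nat 2%nat) = (0, 0, 1).
Proof.
  pose proof (gInv2 s) as I. unfold is_id, mmul in I. simpl. rewrite !I by lia. auto.
Qed.

Lemma face_dominated (f g : form) (C : R) : is_form 4 f -> nonneg f -> P34 g -> 0 <= C ->
  (forall x y z, g x y z <= C * f x y z) -> face f g.
Proof.
  intros Hf Hfn Hg HC Hb. split; [exact Hg|].
  set (e := 1 / (C + 1)).
  assert (He : 0 < e) by (unfold e; apply Rdiv_lt_0_compat; lra).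
  assert (HeC : e * C = 1 - e) by (unfold e; field; lra).
  exists e. split; [exact He|]. split.
  - apply (form_ext _ (fun x y z => f x y z + (- e) * g x y z)).
    + apply form_add, form_scal; [exact Hf | apply Hg].
    + intros; ring.
  - intros x y z. specialize (Hb x y z). specialize (Hfn x y z).
    assert (e * g x y z <= (e * C) * f x y z) by (rewrite Rmult_assoc; now apply Rmult_le_compat_l; lra).
    simpl. nra.
Qed.

Lemma act_face_bound (f h : form) (s : GL3) : act_set s (face f) h ->
  exists eps, 0 < eps /\ forall x y z, eps * pull s h x y z <= f x y z.
Proof.
  intros [g [[_ [eps [He [_ Hn]]]] Hact]]. exists eps. split; [exact He|]. intros x y z.
  rewrite <- (pull_act s h g Hact). specialize (Hn x y z). simpl in Hn. lra.
Qed.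

Lemma lU_P34 (l : vec) U h : F_lU l U h -> P34 h.
Proof.
  intros [g [Hg [Hn [_ E]]]]. split.
  - apply (form_ext _ _ _ (form_mul 2 2 _ g (form_lin_pow 2 l) Hg)). intros; apply E.
  - intros x y z. rewrite E. apply Rmult_le_pos; [apply pow2_ge_0 | apply Hn].
Qed.

Lemma lU_subset_face (l : vec) (U : form -> Prop) (f : form) (s : GL3) :
  is_form 4 f -> nonneg f ->
  (forall g, is_form 2 g -> nonneg g -> U g -> exists C, 0 <= C /\
     forall x y z, lin (tvec s l) x y z ^ 2 * pull s g x y z <= C * f x y z) ->
  subset_up_to_GL (F_lU l U) (face f).
Proof.
  intros Hf Hfn HB. apply (subset_by_pull _ _ s). intros h Hh.
  pose proof (lU_P34 _ _ _ Hh) as HP.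
  destruct Hh as [g [Hg [Hgn [HU E]]]].
  destruct (HB g Hg Hgn HU) as [C [HC Hb]].
  apply (face_dominated f _ C Hf Hfn (pull_P34 s h HP) HC).
  intros x y z. unfold pull at 1. rewrite E, lin_pull. apply Hb.
Qed.

Definition fT1s : form := fun x y z => (x * y + z ^ 2) ^ 2 + y ^ 2 * z ^ 2 + y ^ 4.
Definition fT1ss : form := fun x y z => (x * y + z ^ 2) ^ 2 + y ^ 4.
Definition fT2s : form := fun x y z => (x * y + z ^ 2) ^ 2 + y ^ 2 * z ^ 2.

Lemma T_forms_quartic : is_form 4 fT1s /\ is_form 4 fT1ss /\ is_form 4 fT2s.
Proof.
  assert (Fq : is_form 2 (fun x y z => x * y + z ^ 2)).
  { apply (form_ext _ (fun x y z => x ^ 1 * y ^ 1 * z ^ (2 - 1 - 1) + x ^ 0 * y ^ 0 * z ^ (2 - 0 - 0))).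
    - apply form_add; apply form_monomial; lia.
    - intros; simpl; ring. }
  assert (Fy : is_form 2 (fun x y z => y ^ 2)).
  { apply (form_ext _ (fun x y z => x ^ 0 * y ^ 2 * z ^ (2 - 0 - 2))).
    - apply form_monomial; lia.
    - intros; simpl; ring. }
  assert (Fz : is_form 2 (fun x y z => z ^ 2)).
  { apply (form_ext _ (fun x y z => x ^ 0 * y ^ 0 * z ^ (2 - 0 - 0))).
    - apply form_monomial; lia.
    - intros; simpl; ring. }
  pose proof (form_mul 2 2 _ _ Fq Fq) as Fqq. pose proof (form_mul 2 2 _ _ Fy Fz) as Fyz.
  pose proof (form_mul 2 2 _ _ Fy Fy) as Fyy. simpl in Fqq, Fyz, Fyy.
  unfold fT1s, fT1ss, fT2s. split; [|split].
  - apply (form_ext _ _ _ (form_add _ _ _ (form_add _ _ _ Fqq Fyz) Fyy)). intros; ring.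
  - apply (form_ext _ _ _ (form_add _ _ _ Fqq Fyy)). intros; ring.
  - apply (form_ext _ _ _ (form_add _ _ _ Fqq Fyz)). intros; ring.
Qed.

Lemma T_forms_nonneg : nonneg fT1s /\ nonneg fT1ss /\ nonneg fT2s.
Proof.
  unfold nonneg, fT1s, fT1ss, fT2s. split; [|split]; intros x y z;
    pose proof (pow2_ge_0 (x * y + z ^ 2)); pose proof (pow2_ge_0 (y * z));
    pose proof (pow2_ge_0 (y ^ 2)); nra.
Qed.

Lemma T_forms_dominate_square : forall x y z,
  (x * y + z ^ 2) ^ 2 <= fT1s x y z /\ (x * y + z ^ 2) ^ 2 <= fT1ss x y z /\
  (x * y + z ^ 2) ^ 2 <= fT2s x y z.
Proof.
  intros x y z. unfold fT1s, fT1ss, fT2s.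
  pose proof (pow2_ge_0 (y * z)). pose proof (pow2_ge_0 (y ^ 2)). repeat split; nra.
Qed.

Lemma quad_coeffs (g : form) : is_form 2 g -> exists c00 c01 c02 c10 c11 c20, forall x y z,
  g x y z = c00 * z ^ 2 + c01 * y * z + c02 * y ^ 2 + c10 * x * z + c11 * x * y + c20 * x ^ 2.
Proof.
  intros [c H]. exists (c 0 0)%nat, (c 0 1)%nat, (c 0 2)%nat, (c 1 0)%nat, (c 1 1)%nat, (c 2 0)%nat.
  intros. rewrite H. simpl. ring.
Qed.

Lemma nonneg_no_linear_term (a b : R) : (forall t, 0 <= a * t + b * t ^ 2) -> a = 0.
Proof.
  intros H. destruct (Req_dec a 0) as [|Ha]; [assumption|]. exfalso.
  set (u := 1 / (2 * (b ^ 2 + 1))).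
  assert (Hu : 0 < u) by (unfold u; apply Rdiv_lt_0_compat; nra).
  assert (Hbu : b * u < 1) by (unfold u; apply (Rmult_lt_reg_l (2 * (b ^ 2 + 1))); [nra|];
                               field_simplify; nra).
  specialize (H (- a * u)). pose proof (Rsqr_pos_lt a Ha). unfold Rsqr in *.
  assert (0 < a * a * u) by (apply Rmult_lt_0_compat; assumption).
  nra.
Qed.

Lemma quad_vanish_e1 (g : form) : is_form 2 g -> nonneg g -> g 1 0 0 = 0 ->
  forall x y z, g x y z = g 0 y z.
Proof.
  intros Hg Hn H0. destruct (quad_coeffs g Hg) as [c00 [c01 [c02 [c10 [c11 [c20 C]]]]]].
  assert (Z20 : c20 = 0) by (rewrite C in H0; ring_simplify in H0; exact H0).
  assert (Z10 : c10 = 0).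
  { apply (nonneg_no_linear_term _ c00). intros t. specialize (Hn 1 0 t). rewrite C in Hn. lra. }
  assert (Z11 : c11 = 0).
  { apply (nonneg_no_linear_term _ c02). intros t. specialize (Hn 1 t 0). rewrite C in Hn. lra. }
  intros x y z. rewrite !C, Z20, Z10, Z11. ring.
Qed.

Lemma quad_vanish_y0 (g : form) : is_form 2 g -> nonneg g -> (forall x z, g x 0 z = 0) ->
  forall x y z, g x y z = g 0 1 0 * y ^ 2.
Proof.
  intros Hg Hn H0. destruct (quad_coeffs g Hg) as [c00 [c01 [c02 [c10 [c11 [c20 C]]]]]].
  pose proof (H0 0 1) as A. pose proof (H0 1 0) as B. pose proof (H0 1 1) as D.
  rewrite C in A, B, D. ring_simplify in A. ring_simplify in B. ring_simplify in D.
  assert (Z01 : c01 = 0).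
  { apply (nonneg_no_linear_term _ c02). intros t. specialize (Hn 0 t 1). rewrite C in Hn. lra. }
  assert (Z11 : c11 = 0).
  { apply (nonneg_no_linear_term _ c02). intros t. specialize (Hn 1 t 0). rewrite C in Hn. lra. }
  intros x y z. rewrite !C, Z01, Z11. replace c00 with 0 by lra. replace c20 with 0 by lra.
  replace c10 with 0 by lra. ring.
Qed.

Lemma quad_vanish_z0 (g : form) : is_form 2 g -> nonneg g -> (forall x y, g x y 0 = 0) ->
  forall x y z, g x y z = g 0 0 1 * z ^ 2.
Proof.
  intros Hg Hn H0. destruct (quad_coeffs g Hg) as [c00 [c01 [c02 [c10 [c11 [c20 C]]]]]].
  pose proof (H0 0 1) as A. pose proof (H0 1 0) as B. pose proof (H0 1 1) as D.
  rewrite C in A, B, D. ring_simplify in A. ring_simplify in B. ring_simplify in D.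
  assert (Z01 : c01 = 0).
  { apply (nonneg_no_linear_term _ c00). intros t. specialize (Hn 0 1 t). rewrite C in Hn. lra. }
  assert (Z10 : c10 = 0).
  { apply (nonneg_no_linear_term _ c00). intros t. specialize (Hn 1 0 t). rewrite C in Hn. lra. }
  intros x y z. rewrite !C, Z01, Z10. replace c02 with 0 by lra. replace c20 with 0 by lra.
  replace c11 with 0 by lra. ring.
Qed.

Lemma term_bound (c m S : R) : Rabs m <= S -> c * m <= Rabs c * S.
Proof.
  intros H. eapply Rle_trans; [apply Rle_abs|]. rewrite Rabs_mult.
  apply Rmult_le_compat_l; [apply Rabs_pos | exact H].
Qed.

Lemma quad_bound (g : form) : is_form 2 g ->
  exists B, 0 <= B /\ forall x y z, g x y z <= B * (x ^ 2 + y ^ 2 + z ^ 2).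
Proof.
  intros Hg. destruct (quad_coeffs g Hg) as [c00 [c01 [c02 [c10 [c11 [c20 C]]]]]].
  exists (Rabs c00 + Rabs c01 + Rabs c02 + Rabs c10 + Rabs c11 + Rabs c20).
  split; [pose proof (Rabs_pos c00); pose proof (Rabs_pos c01); pose proof (Rabs_pos c02);
          pose proof (Rabs_pos c10); pose proof (Rabs_pos c11); pose proof (Rabs_pos c20); lra|].
  intros x y z. rewrite C. set (S := x ^ 2 + y ^ 2 + z ^ 2).
  assert (Hprod : forall u v, u ^ 2 + v ^ 2 <= S -> Rabs (u * v) <= S).
  { intros u v H. apply Rabs_le. pose proof (pow2_ge_0 (u + v)). pose proof (pow2_ge_0 (u - v)). nra. }
  assert (Hpow : forall u, u ^ 2 <= S -> Rabs (u ^ 2) <= S).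
  { intros u H. rewrite Rabs_right by (apply Rle_ge, pow2_ge_0). exact H. }
  pose proof (pow2_ge_0 x). pose proof (pow2_ge_0 y). pose proof (pow2_ge_0 z).
  pose proof (term_bound c00 (z ^ 2) S (Hpow z ltac:(unfold S; lra))).
  pose proof (term_bound c01 (y * z) S (Hprod y z ltac:(unfold S; lra))).
  pose proof (term_bound c02 (y ^ 2) S (Hpow y ltac:(unfold S; lra))).
  pose proof (term_bound c10 (x * z) S (Hprod x z ltac:(unfold S; lra))).
  pose proof (term_bound c11 (x * y) S (Hprod x y ltac:(unfold S; lra))).
  pose proof (term_bound c20 (x ^ 2) S (Hpow x ltac:(unfold S; lra))).
  rewrite !Rmult_assoc. nra.
Qed.

Lemma cross_zero_proportional a b c d e f : nonzero_vec (a, b, c) ->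
  b * f - c * e = 0 -> c * d - a * f = 0 -> a * e - b * d = 0 -> proportional (a, b, c) (d, e, f).
Proof.
  intros hl W1 W2 W3. pose proof (norm2_pos _ _ _ hl) as L.
  set (n := a ^ 2 + b ^ 2 + c ^ 2) in L. set (t := (a * d + b * e + c * f) / n).
  assert (Ht : t * n = a * d + b * e + c * f) by (unfold t; field; lra).
  assert (Id1 : n * d - a * (t * n) = c * (c * d - a * f) - b * (a * e - b * d))
    by (rewrite Ht; unfold n; ring).
  assert (Id2 : n * e - b * (t * n) = a * (a * e - b * d) - c * (b * f - c * e))
    by (rewrite Ht; unfold n; ring).
  assert (Id3 : n * f - c * (t * n) = b * (b * f - c * e) - a * (c * d - a * f))
    by (rewrite Ht; unfold n; ring).
  rewrite W1, W2, W3 in *.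
  exists t. simpl. f_equal; [f_equal|]; apply (Rmult_eq_reg_l n); lra.
Qed.

Lemma GL_sending_lines a b c d e f : nonzero_vec (a, b, c) -> ~ proportional (a, b, c) (d, e, f) ->
  exists s : GL3, tvec s (a, b, c) = (0, 1, 0) /\ tvec s (d, e, f) = (0, 0, 1).
Proof.
  intros hl hp.
  set (N := mk3 (b * f - c * e) (c * d - a * f) (a * e - b * d) a b c d e f).
  assert (D : det3 N <> 0).
  { intros E. apply hp. unfold det3, N, mk3 in E. simpl in E.
    pose proof (pow2_ge_0 (b * f - c * e)). pose proof (pow2_ge_0 (c * d - a * f)).
    pose proof (pow2_ge_0 (a * e - b * d)).
    apply cross_zero_proportional; [exact hl | apply (pow_eq0 _ 2) .. ]; nra. }
  exists (GL_inv (GL_of N D)). exact (tvec_rows_inv (GL_inv (GL_of N D))).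
Qed.

Lemma GL_point_on_line a b c p1 p2 p3 : nonzero_vec (a, b, c) -> nonzero_vec (p1, p2, p3) ->
  a * p1 + b * p2 + c * p3 = 0 ->
  exists (s : GL3) (L : R), (forall g, pull s g 1 0 0 = eval g (p1, p2, p3)) /\
                            tvec s (a, b, c) = (0, L, 0).
Proof.
  intros hl hp hpl.
  set (M := mk3 p1 a (b * p3 - c * p2) p2 b (c * p1 - a * p3) p3 c (a * p2 - b * p1)).
  assert (D : det3 M <> 0).
  { assert (E : det3 M = (a * p1 + b * p2 + c * p3) ^ 2
                         - (a ^ 2 + b ^ 2 + c ^ 2) * (p1 ^ 2 + p2 ^ 2 + p3 ^ 2))
      by (unfold det3, M, mk3; simpl; ring).
    rewrite E, hpl. pose proof (norm2_pos _ _ _ hl). pose proof (norm2_pos _ _ _ hp). nra. }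
  exists (GL_of M D), (a * a + b * b + c * c). split.
  - intros g. unfold pull, eval, mapp. simpl. f_equal; ring.
  - simpl. f_equal; [f_equal|]; [rewrite <- hpl |]; ring.
Qed.

Definition MQ : mat := mk3 (1 / 2) (1 / 2) 0 (1 / 2) (- 1 / 2) 0 0 0 1.

Lemma MQ_det : det3 MQ <> 0.
Proof. unfold det3, MQ, mk3. simpl. lra. Qed.

Lemma pull_Q (x y z : R) : pull (GL_of MQ MQ_det) (fun x y z => (x ^ 2 - y ^ 2 + z ^ 2) ^ 2) x y z
                           = (x * y + z ^ 2) ^ 2.
Proof. unfold pull, mapp, MQ, mk3. simpl. field. Qed.

(* (i) [F_(l,{p}) ⋐ F*_T1]: send [p] to [e1] and [l] to [L y]; then [g] only involves
   [y, z], and [L^2 y^2 g(0, y, z)] is dominated by [y^4 + y^2 z^2]. *)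
Lemma L2_in_T1s (l p : vec) : nonzero_vec l -> nonzero_vec p -> on_line p l ->
  subset_up_to_GL (F_L2 l p) F_T1s.
Proof.
  destruct l as [[a b] c], p as [[p1 p2] p3]. intros hl hp hpl. simpl in hpl.
  destruct (GL_point_on_line a b c p1 p2 p3 hl hp hpl) as [s [L [Hp Hl]]].
  destruct T_forms_quartic as [Hf _]. destruct T_forms_nonneg as [Hfn _].
  apply (lU_subset_face _ _ fT1s s Hf Hfn). intros g Hg Hgn Hv.
  assert (Hg' : forall x y z, pull s g x y z = pull s g 0 y z).
  { apply quad_vanish_e1; [now apply pull_form | intros x y z; apply Hgn | now rewrite Hp]. }
  destruct (quad_bound _ (pull_form s 2 g Hg)) as [B [HB Hb]].
  exists (L ^ 2 * B). split; [apply Rmult_le_pos; [apply pow2_ge_0 | exact HB]|].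
  intros x y z. rewrite Hl, Hg'. specialize (Hb 0 y z).
  assert (Hdom : y ^ 4 + y ^ 2 * z ^ 2 <= fT1s x y z)
    by (unfold fT1s; pose proof (pow2_ge_0 (x * y + z ^ 2)); lra).
  assert (Hyy : 0 <= L ^ 2 * y ^ 2) by (apply Rmult_le_pos; apply pow2_ge_0).
  replace (lin (0, L, 0) x y z ^ 2) with (L ^ 2 * y ^ 2) by (simpl; ring).
  apply (Rle_trans _ (L ^ 2 * B * (y ^ 4 + y ^ 2 * z ^ 2))).
  - eapply Rle_trans; [apply Rmult_le_compat_l; [exact Hyy | exact Hb] | right; ring].
  - apply Rmult_le_compat_l; [apply Rmult_le_pos; [apply pow2_ge_0 | exact HB] | exact Hdom].
Qed.

(* (ii) [F_(l,l) ⋐ F**_T1]: send [l] to [y]; then [g = c y^2] and [l^2 g = c y^4]. *)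
Lemma L4_in_T1ss (l k : vec) : nonzero_vec l -> ~ proportional l k ->
  subset_up_to_GL (F_L4 l) F_T1ss.
Proof.
  destruct l as [[a b] c], k as [[d e] f]. intros hl hlk.
  destruct (GL_sending_lines a b c d e f hl hlk) as [s [Hl _]].
  destruct T_forms_quartic as [_ [Hf _]]. destruct T_forms_nonneg as [_ [Hfn _]].
  apply (lU_subset_face _ _ fT1ss s Hf Hfn). intros g Hg Hgn Hv.
  assert (Hg' : forall x y z, pull s g x y z = pull s g 0 1 0 * y ^ 2).
  { apply quad_vanish_y0; [now apply pull_form | intros x y z; apply Hgn |].
    intros x z. apply Hv. rewrite lin_pull, Hl. simpl. ring. }
  exists (pull s g 0 1 0). split; [apply Hgn|]. intros x y z. rewrite Hl, Hg'.
  replace (lin (0, 1, 0) x y z ^ 2 * (pull s g 0 1 0 * y ^ 2)) with (pull s g 0 1 0 * y ^ 4)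
    by (simpl; ring).
  apply Rmult_le_compat_l; [apply Hgn|].
  unfold fT1ss. pose proof (pow2_ge_0 (x * y + z ^ 2)). lra.
Qed.

(* (iii) [F_(l,k) ⋐ F*_T2]: send [l, k] to [y, z]; then [g = c z^2] and [l^2 g = c y^2 z^2]. *)
Lemma L3_in_T2s (l k : vec) : nonzero_vec l -> ~ proportional l k ->
  subset_up_to_GL (F_L3 l k) F_T2s.
Proof.
  destruct l as [[a b] c], k as [[d e] f]. intros hl hlk.
  destruct (GL_sending_lines a b c d e f hl hlk) as [s [Hl Hk]].
  destruct T_forms_quartic as [_ [_ Hf]]. destruct T_forms_nonneg as [_ [_ Hfn]].
  apply (lU_subset_face _ _ fT2s s Hf Hfn). intros g Hg Hgn Hv.
  assert (Hg' : forall x y z, pull s g x y z = pull s g 0 0 1 * z ^ 2).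
  { apply quad_vanish_z0; [now apply pull_form | intros x y z; apply Hgn |].
    intros x y. apply Hv. rewrite lin_pull, Hk. simpl. ring. }
  exists (pull s g 0 0 1). split; [apply Hgn|]. intros x y z. rewrite Hl, Hg'.
  replace (lin (0, 1, 0) x y z ^ 2 * (pull s g 0 0 1 * z ^ 2))
    with (pull s g 0 0 1 * (y ^ 2 * z ^ 2)) by (simpl; ring).
  apply Rmult_le_compat_l; [apply Hgn|].
  unfold fT2s. pose proof (pow2_ge_0 (x * y + z ^ 2)). lra.
Qed.

Lemma Q_in_face (f : form) : is_form 4 f -> nonneg f ->
  (forall x y z, (x * y + z ^ 2) ^ 2 <= f x y z) -> subset_up_to_GL F_Q (face f).
Proof.
  intros Hf Hfn Hdom. apply (subset_by_pull _ _ (GL_of MQ MQ_det)).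
  intros h [Hh [eps [He [_ Hn]]]].
  apply (face_dominated f _ (1 / eps) Hf Hfn (pull_P34 _ _ Hh)); [left; apply Rdiv_lt_0_compat; lra|].
  intros x y z. specialize (Hn (mapp MQ x y z 0) (mapp MQ x y z 1) (mapp MQ x y z 2)).
  pose proof (pull_Q x y z) as E. unfold pull in E |- *. cbn [gM GL_of] in E |- *. cbv beta in Hn.
  rewrite E in Hn. specialize (Hdom x y z).
  apply (Rmult_le_reg_l eps); [exact He|].
  replace (eps * (1 / eps * f x y z)) with (f x y z) by (field; lra). lra.
Qed.

Lemma continuous_nonpos_at_0 (psi : R -> R) :
  continuity_pt psi 0 -> (forall s, 0 < s < 1 -> psi s <= 0) -> psi 0 <= 0.
Proof.
  intros Hc H. destruct (Rle_or_lt (psi 0) 0) as [|Hp]; [assumption|].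
  destruct (Hc (psi 0) Hp) as [d [Hd Hd2]].
  set (s := Rmin (d / 2) (1 / 2)).
  assert (0 < s) by (unfold s; apply Rmin_pos; lra).
  assert (s <= d / 2) by apply Rmin_l. assert (s <= 1 / 2) by apply Rmin_r.
  assert (psi s <= 0) by (apply H; lra).
  assert (Hclose : Rabs (psi s - psi 0) < psi 0).
  { apply Hd2. split; [split; [exact I | lra] |].
    simpl. unfold R_dist. rewrite Rminus_0_r, Rabs_right; lra. }
  rewrite Rabs_left1 in Hclose by lra. lra.
Qed.

Lemma vanishing_order_step (eps C a : R) (Q : R -> R) m : continuity_pt Q 0 -> 0 < eps ->
  (forall s, 0 < s < 1 -> eps * (a + s * Q s) ^ 2 <= C * s ^ (2 * S m)) ->
  a = 0 /\ (forall s, 0 < s < 1 -> eps * Q s ^ 2 <= C * s ^ (2 * m)).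
Proof.
  intros HQ He H.
  assert (Ha : a = 0).
  { assert (Hc : continuity_pt (fun s => eps * (a + s * Q s) ^ 2 - C * s ^ (2 * S m)) 0) by reg.
    pose proof (continuous_nonpos_at_0 _ Hc) as Hl. cbv beta in Hl. rewrite pow_i in Hl by lia.
    assert (eps * (a + 0 * Q 0) ^ 2 - C * 0 <= 0) by (apply Hl; intros s Hs; specialize (H s Hs); lra).
    apply (pow_eq0 _ 2). pose proof (pow2_ge_0 a). ring_simplify in H0. nra. }
  split; [exact Ha|]. subst a. intros s Hs. specialize (H s Hs).
  replace (s ^ (2 * S m)) with (s * s * s ^ (2 * m)) in H
    by (replace (2 * S m)%nat with (S (S (2 * m))) by lia; simpl; ring).
  apply (Rmult_le_reg_l (s * s)); [nra|].
  replace (s * s * (eps * Q s ^ 2)) with (eps * (0 + s * Q s) ^ 2) by ring. lra.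
Qed.

Lemma quartic_order_step (eps C p0 p1 p2 p3 p4 : R) m : 0 < eps ->
  (forall s, 0 < s < 1 -> eps * (p0 + p1 * s + p2 * s ^ 2 + p3 * s ^ 3 + p4 * s ^ 4) ^ 2 <= C * s ^ (2 * S m)) ->
  p0 = 0 /\
  (forall s, 0 < s < 1 -> eps * (p1 + p2 * s + p3 * s ^ 2 + p4 * s ^ 3 + 0 * s ^ 4) ^ 2 <= C * s ^ (2 * m)).
Proof.
  intros He H.
  destruct (vanishing_order_step eps C p0 (fun s => p1 + p2 * s + p3 * s ^ 2 + p4 * s ^ 3) m)
    as [H0 H1]; [reg | exact He | |].
  - intros s Hs. eapply Rle_trans; [|apply (H s Hs)]. right. ring.
  - split; [exact H0|]. intros s Hs. eapply Rle_trans; [|apply (H1 s Hs)]. right. ring.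
Qed.

Lemma quartic_order3 (eps C p0 p1 p2 p3 p4 : R) : 0 < eps ->
  (forall s, 0 < s < 1 -> eps * (p0 + p1 * s + p2 * s ^ 2 + p3 * s ^ 3 + p4 * s ^ 4) ^ 2 <= C * s ^ 6) ->
  p0 = 0 /\ p1 = 0 /\ p2 = 0.
Proof.
  intros He H.
  destruct (quartic_order_step eps C p0 p1 p2 p3 p4 2 He H) as [H0 H1].
  destruct (quartic_order_step eps C p1 p2 p3 p4 0 1 He H1) as [H2 H3].
  destruct (quartic_order_step eps C p2 p3 p4 0 0 0 He H3) as [H4 _].
  auto.
Qed.

Lemma quartic_order4 (eps C p0 p1 p2 p3 p4 : R) : 0 < eps ->
  (forall s, 0 < s < 1 -> eps * (p0 + p1 * s + p2 * s ^ 2 + p3 * s ^ 3 + p4 * s ^ 4) ^ 2 <= C * s ^ 8) ->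
  p0 = 0 /\ p1 = 0 /\ p2 = 0 /\ p3 = 0.
Proof.
  intros He H.
  destruct (quartic_order_step eps C p0 p1 p2 p3 p4 3 He H) as [H0 H1].
  destruct (quartic_order3 eps C p1 p2 p3 p4 0 He H1) as [H2 [H3 H4]].
  auto.
Qed.

(* Products of two linear forms along the parabola [(1, -t^2, t)], on which
   [x y + z^2] vanishes. *)

Lemma product_on_parabola r0 r1 r2 w0 w1 w2 t :
  lin (r0, r1, r2) 1 (- t ^ 2) t * lin (w0, w1, w2) 1 (- t ^ 2) t =
  r0 * w0 + (r0 * w2 + r2 * w0) * t + (- r0 * w1 + r2 * w2 - r1 * w0) * t ^ 2
  + (- r2 * w1 - r1 * w2) * t ^ 3 + r1 * w1 * t ^ 4.
Proof. simpl. ring. Qed.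

Lemma product_order3 (eps C r0 r1 r2 w0 w1 w2 : R) : 0 < eps ->
  (forall t, 0 < t < 1 ->
     eps * (lin (r0, r1, r2) 1 (- t ^ 2) t * lin (w0, w1, w2) 1 (- t ^ 2) t) ^ 2 <= C * t ^ 6) ->
  r0 * w0 = 0 /\ r0 * w2 + r2 * w0 = 0 /\ - r0 * w1 + r2 * w2 - r1 * w0 = 0.
Proof.
  intros He H. apply (quartic_order3 eps C _ _ _ (- r2 * w1 - r1 * w2) (r1 * w1) He).
  intros t Ht. rewrite <- product_on_parabola. apply H, Ht.
Qed.

Lemma product_order4 (eps C r0 r1 r2 w0 w1 w2 : R) : 0 < eps ->
  (forall t, 0 < t < 1 ->
     eps * (lin (r0, r1, r2) 1 (- t ^ 2) t * lin (w0, w1, w2) 1 (- t ^ 2) t) ^ 2 <= C * t ^ 8) ->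
  r0 * w0 = 0 /\ r0 * w2 + r2 * w0 = 0 /\ - r0 * w1 + r2 * w2 - r1 * w0 = 0 /\
  - r2 * w1 - r1 * w2 = 0.
Proof.
  intros He H. apply (quartic_order4 eps C _ _ _ _ (r1 * w1) He).
  intros t Ht. rewrite <- product_on_parabola. apply H, Ht.
Qed.

Lemma order3_cases r0 r1 r2 w0 w1 w2 :
  r0 * w0 = 0 -> r0 * w2 + r2 * w0 = 0 -> - r0 * w1 + r2 * w2 - r1 * w0 = 0 ->
  (r0 <> 0 -> (w0, w1, w2) = (0, 0, 0)) /\ (r0 = 0 -> w0 = 0 \/ (r0, r1, r2) = (0, 0, 0)).
Proof.
  intros P0 P1 P2. split.
  - intros Hr.
    assert (w0 = 0) by (apply (Rmult_eq_reg_l r0); lra).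
    assert (w2 = 0) by (apply (Rmult_eq_reg_l r0); [subst; lra | exact Hr]).
    assert (w1 = 0) by (apply (Rmult_eq_reg_l r0); [subst; lra | exact Hr]).
    now subst.
  - intros ->. destruct (Req_dec w0 0) as [|Hw]; [now left | right].
    assert (r2 = 0) by (apply (Rmult_eq_reg_r w0); lra).
    assert (r1 = 0) by (apply (Rmult_eq_reg_r w0); [subst; lra | exact Hw]).
    now subst.
Qed.

(* If the product of two nonzero linear forms vanishes to order 4 on the parabola, both
   are multiples of [y], hence proportional. *)
Lemma order4_proportional r0 r1 r2 u0 u1 u2 :
  r0 * u0 = 0 -> r0 * u2 + r2 * u0 = 0 -> - r0 * u1 + r2 * u2 - r1 * u0 = 0 ->
  - r2 * u1 - r1 * u2 = 0 ->
  nonzero_vec (r0, r1, r2) -> nonzero_vec (u0, u1, u2) -> proportional (r0, r1, r2) (u0, u1, u2).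
Proof.
  intros P0 P1 P2 P3 Hr Hu.
  destruct (order3_cases r0 r1 r2 u0 u1 u2 P0 P1 P2) as [C1 C2].
  destruct (Req_dec r0 0) as [Z0|Z0]; [| now destruct (Hu (C1 Z0))].
  destruct (C2 Z0) as [Y0|]; [| now destruct Hr].
  subst r0 u0.
  destruct (Req_dec r2 0) as [Z2|Z2].
  - subst r2. assert (Z1 : r1 <> 0) by (intros ->; now apply Hr).
    assert (u2 = 0) by (apply (Rmult_eq_reg_l r1); lra). subst u2.
    exists (u1 / r1). simpl. f_equal; [f_equal|]; field; exact Z1.
  - exfalso. apply Hu.
    assert (u2 = 0) by (apply (Rmult_eq_reg_l r2); lra). subst u2.
    assert (u1 = 0) by (apply (Rmult_eq_reg_l r2); lra). now subst.
Qed.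

(* A nonzero point [m] on the line [l] with [m x q = 0] forces [q] onto [l]. *)
Lemma parallel_point_on_line a b c q1 q2 q3 m0 m1 m2 : nonzero_vec (m0, m1, m2) ->
  lin (a, b, c) m0 m1 m2 = 0 -> lin (0, q3, - q2) m0 m1 m2 = 0 ->
  lin (- q3, 0, q1) m0 m1 m2 = 0 -> lin (q2, - q1, 0) m0 m1 m2 = 0 ->
  lin (a, b, c) q1 q2 q3 = 0.
Proof.
  intros Hm Hl Ha Hb Hc. pose proof (norm2_pos _ _ _ Hm) as N.
  assert (Id : (m0 ^ 2 + m1 ^ 2 + m2 ^ 2) * lin (a, b, c) q1 q2 q3 =
     lin (a, b, c) m0 m1 m2 * (m0 * q1 + m1 * q2 + m2 * q3)
     - (a * (m1 * lin (q2, - q1, 0) m0 m1 m2 - m2 * lin (- q3, 0, q1) m0 m1 m2)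
        + b * (m2 * lin (0, q3, - q2) m0 m1 m2 - m0 * lin (q2, - q1, 0) m0 m1 m2)
        + c * (m0 * lin (- q3, 0, q1) m0 m1 m2 - m1 * lin (0, q3, - q2) m0 m1 m2)))
    by (simpl; ring).
  rewrite Hl, Ha, Hb, Hc in Id.
  apply (Rmult_eq_reg_l (m0 ^ 2 + m1 ^ 2 + m2 ^ 2)); lra.
Qed.

Lemma eps_pow4_nonpos (eps a : R) : 0 < eps -> eps * a ^ 4 <= 0 -> a = 0.
Proof.
  intros He H. assert (0 <= a ^ 4) by (replace (a ^ 4) with ((a ^ 2) ^ 2) by ring; apply pow2_ge_0).
  apply (pow_eq0 _ 4). nra.
Qed.

(* (iii) [F_(l,l)] is not in any transform of [F*_T2]: [l^4] would vanish at [e1], [e2]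
   and to order 6 on the parabola, forcing [l = 0]. *)
Lemma L4_notin_T2s (l : vec) : nonzero_vec l -> ~ subset_up_to_GL (F_L4 l) F_T2s.
Proof.
  intros hl [s Hs].
  set (h := fun x y z => lin l x y z ^ 2 * lin l x y z ^ 2).
  assert (Hh : F_L4 l h).
  { exists (fun x y z => lin l x y z ^ 2). repeat split.
    - apply form_lin_pow.
    - intros x y z. apply pow2_ge_0.
    - intros x y z E. rewrite E. ring. }
  destruct (act_face_bound _ _ s (Hs h Hh)) as [eps [He Hb]].
  pose proof (tvec_nonzero s l hl) as Hr.
  destruct (tvec s l) as [[r0 r1] r2] eqn:Er.
  assert (Hb' : forall x y z, eps * lin (r0, r1, r2) x y z ^ 4 <= fT2s x y z).
  { intros x y z. specialize (Hb x y z). unfold pull, h in Hb. rewrite lin_pull, Er in Hb.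
    replace (lin (r0, r1, r2) x y z ^ 4) with (lin (r0, r1, r2) x y z ^ 2 * lin (r0, r1, r2) x y z ^ 2)
      by ring. exact Hb. }
  assert (Z0 : r0 = 0).
  { apply (eps_pow4_nonpos eps); [exact He|]. specialize (Hb' 1 0 0). unfold fT2s in Hb'.
    simpl in Hb'. lra. }
  assert (Z1 : r1 = 0).
  { apply (eps_pow4_nonpos eps); [exact He|]. specialize (Hb' 0 1 0). unfold fT2s in Hb'.
    simpl in Hb'. lra. }
  subst r0 r1.
  assert (Z2 : r2 ^ 2 = 0).
  { destruct (quartic_order3 eps 1 0 0 (r2 ^ 2) 0 0 He) as [_ [_ H2]]; [|exact H2].
    intros t Ht. specialize (Hb' 1 (- t ^ 2) t). unfold fT2s in Hb'. simpl in Hb'.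
    eapply Rle_trans; [| eapply Rle_trans; [exact Hb' | right; ring]]. right; ring. }
  apply Hr. rewrite (pow_eq0 _ 2 Z2). reflexivity.
Qed.

(* (ii) [F_(l,k)] is not in any transform of [F**_T1]: [l^2 k^2] would vanish to order 8
   on the parabola, forcing [l] and [k] to be proportional. *)
Lemma L3_notin_T1ss (l k : vec) : nonzero_vec l -> nonzero_vec k -> ~ proportional l k ->
  ~ subset_up_to_GL (F_L3 l k) F_T1ss.
Proof.
  intros hl hk hlk [s Hs].
  set (h := fun x y z => lin l x y z ^ 2 * lin k x y z ^ 2).
  assert (Hh : F_L3 l k h).
  { exists (fun x y z => lin k x y z ^ 2). repeat split.
    - apply form_lin_pow.
    - intros x y z. apply pow2_ge_0.
    - intros x y z E. rewrite E. ring. }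
  destruct (act_face_bound _ _ s (Hs h Hh)) as [eps [He Hb]].
  pose proof (tvec_nonzero s l hl) as Hr. pose proof (tvec_nonzero s k hk) as Hu.
  apply hlk, (tvec_proportional s).
  destruct (tvec s l) as [[r0 r1] r2] eqn:Er, (tvec s k) as [[u0 u1] u2] eqn:Eu.
  destruct (product_order4 eps 1 r0 r1 r2 u0 u1 u2 He) as [P0 [P1 [P2 P3]]].
  - intros t Ht. specialize (Hb 1 (- t ^ 2) t). unfold pull, h in Hb.
    rewrite !lin_pull, Er, Eu in Hb. unfold fT1ss in Hb.
    eapply Rle_trans; [| eapply Rle_trans; [exact Hb | right; ring]]. right; ring.
  - now apply order4_proportional.
Qed.

Lemma sum_sq_bound (eps r a b c K : R) : 0 < eps ->
  eps * (r ^ 2 * (a ^ 2 + b ^ 2 + c ^ 2)) <= K ->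
  eps * (r * a) ^ 2 <= K /\ eps * (r * b) ^ 2 <= K /\ eps * (r * c) ^ 2 <= K.
Proof.
  intros He H. pose proof (pow2_ge_0 (r * a)). pose proof (pow2_ge_0 (r * b)).
  pose proof (pow2_ge_0 (r * c)).
  assert (E : eps * (r ^ 2 * (a ^ 2 + b ^ 2 + c ^ 2))
              = eps * (r * a) ^ 2 + eps * (r * b) ^ 2 + eps * (r * c) ^ 2) by ring.
  rewrite E in H. repeat split; nra.
Qed.

(* (i) [F_(l,{q})] with [q] off [l] is not in any transform of [F*_T1]: take
   [h = l^2 |v x q|^2].  Order 6 along the parabola forces either [q = 0], or the point
   [M e1] to lie on [l] and be parallel to [q], i.e. [q] on [l]. *)
Lemma L1_notin_T1s (l q : vec) : nonzero_vec l -> nonzero_vec q -> ~ on_line q l ->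
  ~ subset_up_to_GL (F_L1 l q) F_T1s.
Proof.
  destruct q as [[q1 q2] q3]. intros hl hq hql [s Hs].
  set (g := fun x y z => lin (0, q3, - q2) x y z ^ 2 + lin (- q3, 0, q1) x y z ^ 2
                         + lin (q2, - q1, 0) x y z ^ 2).
  set (h := fun x y z => lin l x y z ^ 2 * g x y z).
  assert (Hh : F_L1 l (q1, q2, q3) h).
  { exists g. repeat split.
    - unfold g. repeat apply form_add; apply form_lin_pow.
    - intros x y z. unfold g. pose proof (pow2_ge_0 (lin (0, q3, - q2) x y z)).
      pose proof (pow2_ge_0 (lin (- q3, 0, q1) x y z)).
      pose proof (pow2_ge_0 (lin (q2, - q1, 0) x y z)). lra.
    - unfold vanish_at, eval, g. simpl. ring. }
  destruct (act_face_bound _ _ s (Hs h Hh)) as [eps [He Hb]].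
  pose proof (tvec_nonzero s l hl) as Hr.
  assert (Hm : lin l (mapp (gM s) 1 0 0 0) (mapp (gM s) 1 0 0 1) (mapp (gM s) 1 0 0 2)
               = lin (tvec s l) 1 0 0) by apply lin_pull.
  assert (Hma := lin_pull s (0, q3, - q2) 1 0 0). assert (Hmb := lin_pull s (- q3, 0, q1) 1 0 0).
  assert (Hmc := lin_pull s (q2, - q1, 0) 1 0 0).
  destruct (tvec s l) as [[r0 r1] r2] eqn:Er.
  destruct (tvec s (0, q3, - q2)) as [[a0 a1] a2] eqn:Ea.
  destruct (tvec s (- q3, 0, q1)) as [[b0 b1] b2] eqn:Eb.
  destruct (tvec s (q2, - q1, 0)) as [[c0 c1] c2] eqn:Ec.
  assert (Hpar : forall t, 0 < t < 1 -> eps * (lin (r0, r1, r2) 1 (- t ^ 2) t ^ 2 *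
      (lin (a0, a1, a2) 1 (- t ^ 2) t ^ 2 + lin (b0, b1, b2) 1 (- t ^ 2) t ^ 2
       + lin (c0, c1, c2) 1 (- t ^ 2) t ^ 2)) <= 2 * t ^ 6).
  { intros t Ht. specialize (Hb 1 (- t ^ 2) t). unfold pull, h, g in Hb.
    rewrite !lin_pull, Er, Ea, Eb, Ec in Hb. unfold fT1s in Hb.
    assert (t ^ 8 <= t ^ 6).
    { replace (t ^ 8) with (t ^ 6 * (t * t)) by ring. pose proof (pow_lt t 6 ltac:(lra)).
      assert (t * t < 1) by nra. nra. }
    eapply Rle_trans; [exact Hb|]. ring_simplify. lra. }
  assert (Hprod : forall w0 w1 w2,
    (forall t, 0 < t < 1 -> eps * (lin (r0, r1, r2) 1 (- t ^ 2) t * lin (w0, w1, w2) 1 (- t ^ 2) t) ^ 2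
                            <= 2 * t ^ 6) ->
    (r0 <> 0 -> (w0, w1, w2) = (0, 0, 0)) /\ (r0 = 0 -> w0 = 0)).
  { intros w0 w1 w2 Hw. destruct (product_order3 eps 2 r0 r1 r2 w0 w1 w2 He Hw) as [P0 [P1 P2]].
    destruct (order3_cases r0 r1 r2 w0 w1 w2 P0 P1 P2) as [C1 C2].
    split; [exact C1|]. intros Z. destruct (C2 Z) as [|E]; [assumption | now destruct Hr]. }
  destruct (Hprod a0 a1 a2) as [Ha1 Ha2]; [intros t Ht; apply (sum_sq_bound _ _ _ _ _ _ He (Hpar t Ht))|].
  destruct (Hprod b0 b1 b2) as [Hb1 Hb2]; [intros t Ht; apply (sum_sq_bound _ _ _ _ _ _ He (Hpar t Ht))|].
  destruct (Hprod c0 c1 c2) as [_ Hc2]; [intros t Ht; apply (sum_sq_bound _ _ _ _ _ _ He (Hpar t Ht))|].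
  destruct (Req_dec r0 0) as [Z|Z].
  - apply hql. destruct l as [[a b] c]. simpl.
    apply (parallel_point_on_line _ _ _ _ _ _ _ _ _ (mapp_nonzero s 1 0 0 ltac:(intros E; injection E; lra)));
      [rewrite Hm | rewrite Hma | rewrite Hmb | rewrite Hmc]; simpl.
    + rewrite Z. ring.
    + rewrite (Ha2 Z). ring.
    + rewrite (Hb2 Z). ring.
    + rewrite (Hc2 Z). ring.
  - apply hq. pose proof (tvec_zero s _ (eq_trans Ea (Ha1 Z))) as A.
    pose proof (tvec_zero s _ (eq_trans Eb (Hb1 Z))) as B.
    injection A as A3 A2. injection B as B3 B1. f_equal; [f_equal|]; lra.
Qed.

Theorem mainTheorem20 (l k p q : vec)
  (hl : nonzero_vec l) (hk : nonzero_vec k) (hlk : ~ proportional l k)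
  (hp : nonzero_vec p) (hpl : on_line p l)
  (hq : nonzero_vec q) (hql : ~ on_line q l) :
  (subset_up_to_GL (F_L2 l p) F_T1s /\ ~ subset_up_to_GL (F_L1 l q) F_T1s) /\
  (subset_up_to_GL (F_L4 l) F_T1ss /\ ~ subset_up_to_GL (F_L3 l k) F_T1ss) /\
  (subset_up_to_GL (F_L3 l k) F_T2s /\ ~ subset_up_to_GL (F_L4 l) F_T2s) /\
  (subset_up_to_GL F_Q F_T1s /\ subset_up_to_GL F_Q F_T1ss /\ subset_up_to_GL F_Q F_T2s).
Proof.
  destruct T_forms_quartic as [F1 [F2 F3]]. destruct T_forms_nonneg as [N1 [N2 N3]].
  split; [split | split; [split | split; [split | split; [| split]]]].
  - now apply L2_in_T1s.
  - now apply L1_notin_T1s.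
  - now apply (L4_in_T1ss l k).
  - now apply L3_notin_T1ss.
  - now apply L3_in_T2s.
  - now apply L4_notin_T2s.
  - apply (Q_in_face fT1s F1 N1). apply T_forms_dominate_square.
  - apply (Q_in_face fT1ss F2 N2). apply T_forms_dominate_square.
  - apply (Q_in_face fT2s F3 N3). apply T_forms_dominate_square.
Qed.
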